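(* Let $n\ge 2$ and let $P\in\mathbb{R}^{n\times n}$ be a row-stochastic matrix with $p_{ii}=0$ and $p_{ij}\in[0,1]$ for all $i,j$, whose associated directed graph (edge $i\to j$ iff $p_{ij}>0$) is strongly connected. Let $\Delta_n=\{x\in\mathbb{R}^n: x\ge 0,\ \mathbb{1}_n^Tx=1\}$. (1) Let $a_i,b_i:[0,1]\to[0,1]$ ($i=1,\dots,n$) be real-analytic functions with $d_i(x_i):=1-a_i(x_i)-b_i(x_i)\neq 0$ (and $\ge 0$) for all $i$ and all $x_i\in[0,1]$. For $x\in\Delta_n$ set $A(x)=\mathrm{diag}(a_1(x_1),\dots,a_n(x_n))$, $B(x)=\mathrm{diag}(b_1(x_1),\dots,b_n(x_n))$, let $Z(x)$ be a doubly stochastic orthogonal matrix whose entries are continuous functions of $x$, and set $C(x)=(\mathbb{I}_n-A(x)-B(x))Z(x)$. Consider the self-appraisal dynamics $$x(s+1)=\big[(\mathbb{I}_n-A(x(s))-B(x(s))P)^{-1}C(x(s))\big]^T\mathbb{1}_n/n .$$ Define $$U(x)=\mathbb{1}_n\mathbb{1}_n^T/n-\big[\mathbb{I}_n-A(x)-B(x)\big]^{-1}B(x)(\mathbb{I}_n-P),$$ and let $u(x)^T$ denote the left eigenvector of $U(x)$ associated with eigenvalue $1$, normalized so that its entries sum to $1$. Then this dynamics is equivalent to $x(s+1)=F(x(s))$, where $F:\Delta_n\to\Delta_n$, $F(x)^T=u(x)^TZ(x)$, is a continuous map. (2) Let $a_i:[0,1]\to[0,1]$ ($i=1,\dots,n$)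 be real-analytic functions, $A(x)=\mathrm{diag}(a_1(x_1),\dots,a_n(x_n))$, and consider the dynamics $x(s+1)=v(x(s))$, where $v(x)\in\Delta_n$ is such that $v(x)^T$ is the left eigenvector of $A(x)+(\mathbb{I}_n-A(x))P$ associated with eigenvalue $1$. Let $p\in\Delta_n$ be such that $p^T$ is the dominant left eigenvector of $P$ (i.e. $p^TP=p^T$). Then this dynamics is equivalent to $x(s+1)=F(x(s))$, where $F:\Delta_n\to\Delta_n$ is the continuous map $$F(x)=\begin{cases} e_i, & \text{if } a_i(x_i)=1 \text{ for some } i,\\[2pt] \left(\dfrac{p_1}{1-a_1(x_1)},\dots,\dfrac{p_n}{1-a_n(x_n)}\right)^T\Big/\displaystyle\sum_{j=1}^n\frac{p_j}{1-a_j(x_j)}, & \text{otherwise.}\end{cases}$$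
   Context: $\mathbb{1}_n$ is the all-ones vector, $\mathbb{I}_n$ the identity matrix, $e_i$ the $i$-th standard basis vector, $\mathrm{diag}(\cdot)$ the diagonal matrix with the given diagonal entries. These dynamics model the evolution over a sequence of issues $s=0,1,2,\dots$ of agents' self-appraisals $x(s)\in\Delta_n$ (reflected appraisals), where in part (1) the opinions on each issue follow $y(t+1)=(A+BP)y(t)+Cy(0)$ and in part (2) they follow $y(t+1)=(A+(\mathbb{I}_n-A)P)y(t)$. In part (2) the paper implicitly assumes that for each $x\in\Delta_n$ at most one index $i$ satisfies $a_i(x_i)=1$ (so that the eigenvector $v(x)$ and the map $F$ are well defined). *)

From HB Require Import structures.
From mathcomp Require Import all_boot all_order all_algebra.
From mathcomp Require Import all_classical all_reals all_analysis.
Set Implicit Arguments. Unset Strict Implicit. Unset Printing Implicit Defensive.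
Import Order.TTheory GRing.Theory Num.Theory numFieldNormedType.Exports.
Local Open Scope classical_set_scope.
Local Open Scope ring_scope.

Section Defs.
Variables (R : realType) (n : nat).

Definition ones : 'cV[R]_n := const_mx 1.

Definition simplex : set 'cV[R]_n :=
  [set x | (forall i, 0 <= x i 0) /\ \sum_i x i 0 = 1].

Definition real_analytic01 (f : R -> R) : Prop :=
  forall t0, 0 <= t0 <= 1 -> exists2 r : R, 0 < r &
    exists c : nat -> R, forall t, 0 <= t <= 1 -> `|t - t0| < r ->
      (series (fun k => c k * (t - t0) ^+ k) : R^nat) @ \oo --> (f t : R).

Definition maps01 (f : R -> R) : Prop :=
  forall t, 0 <= t <= 1 -> 0 <= f t <= 1.

Definition row_stochastic (M : 'M[R]_n) : Prop :=
  (forall i j, 0 <= M i j) /\ (forall i, \sum_j M i j = 1).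

Definition doubly_stochastic (M : 'M[R]_n) : Prop :=
  (forall i j, 0 <= M i j) /\ (forall i, \sum_j M i j = 1) /\
  (forall j, \sum_i M i j = 1).

Definition orthogonal_mx (M : 'M[R]_n) : Prop := M *m M^T = 1%:M.

Definition graph_rel (M : 'M[R]_n) : rel 'I_n := fun i j => 0 < M i j.

Definition strongly_connected (M : 'M[R]_n) : Prop :=
  forall i j, connect (graph_rel M) i j.

Definition diagf (f : 'I_n -> R -> R) (x : 'cV[R]_n) : 'M[R]_n :=
  diag_mx (\row_i f i (x i 0)).

Definition Cmat (a b : 'I_n -> R -> R) (Z : 'cV[R]_n -> 'M[R]_n) x : 'M[R]_n :=
  (1%:M - diagf a x - diagf b x) *m Z x.

Definition dyn1 (P : 'M[R]_n) (a b : 'I_n -> R -> R)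
  (Z : 'cV[R]_n -> 'M[R]_n) (x : 'cV[R]_n) : 'cV[R]_n :=
  (n%:R)^-1 *: ((invmx (1%:M - diagf a x - diagf b x *m P) *m Cmat a b Z x)^T
                 *m ones).

Definition Umat (P : 'M[R]_n) (a b : 'I_n -> R -> R) x : 'M[R]_n :=
  (n%:R)^-1 *: (ones *m ones^T)
  - invmx (1%:M - diagf a x - diagf b x) *m diagf b x *m (1%:M - P).

Definition left_eig1_normalized (M : 'M[R]_n) (u : 'cV[R]_n) : Prop :=
  u^T *m M = u^T /\ \sum_i u i 0 = 1.

Definition M2 (P : 'M[R]_n) (a : 'I_n -> R -> R) x : 'M[R]_n :=
  diagf a x + (1%:M - diagf a x) *m P.

Definition F2 (a : 'I_n -> R -> R) (p : 'cV[R]_n) (x : 'cV[R]_n) : 'cV[R]_n :=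
  match [pick i | a i (x i 0) == 1] with
  | Some i => delta_mx i 0
  | None => (\sum_j p j 0 / (1 - a j (x j 0)))^-1 *:
              \col_j (p j 0 / (1 - a j (x j 0)))
  end.

End Defs.

From HB Require Import structures.
From mathcomp Require Import all_boot all_order all_algebra.
From mathcomp Require Import all_classical all_reals all_analysis.
From mathcomp Require Import lra ring.
Set Implicit Arguments. Unset Strict Implicit. Unset Printing Implicit Defensive.
Import Order.TTheory GRing.Theory Num.Theory numFieldNormedType.Exports.
Local Open Scope classical_set_scope.
Local Open Scope ring_scope.

(* Part (1): put M(x) = I - A - BP and D(x) = I - A - B.  As P is row
   stochastic and 0 <= b_i < 1 - a_i, a minimum principle shows that M y >= 0
   forces y >= 0, so M is invertible with a nonnegative inverse.  Since
   D^-1 M = I + D^-1 B (I - P), a vector u of unit sum satisfies u^T U = u^T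
   iff u^T D^-1 M = 1^T / n; thus u^T = 1^T M^-1 D / n is the unique normalised
   eigenvector and the dynamics reads x(s+1) = (u^T Z)^T, continuous because
   matrix inversion is.
   Part (2): v^T (A + (I - A) P) = v^T says that ((I - A) v)^T is a left fixed
   vector of P; by strong connectivity these are the multiples of p, and p > 0.
   Hence (1 - a_i) v_i = c p_i, which pins v down to F(x).  Writing F(x) as the
   normalisation of the weights p_j prod_(k <> j) (1 - a_k(x_k)) shows that F is
   continuous, since at most one factor vanishes.  Real-analytic functions are
   continuous by a geometric bound on their power series. *)

Section RealAnalytic.
Variable R : realType.

Lemma geometric_partial_sum_le (q : R) (N : nat) : 0 <= q <= 1 / 2 ->
  \sum_(1 <= k < N) q ^+ k <= 2 * q.
Proof.
move=> /andP[q0 q1].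
suff geo m : \sum_(1 <= k < m.+1) q ^+ k <= 2 * q - 2 * q ^+ m.+1.
  case: N => [|N]; first by rewrite big_geq //; lra.
  by apply: le_trans (geo N) _; rewrite lerBlDr lerDl mulr_ge0 ?exprn_ge0.
elim: m => [|m IH]; first by rewrite big_geq // expr1; lra.
rewrite big_nat_recr //= [q ^+ m.+2]exprS.
have : 0 <= (1 / 2 - q) * q ^+ m.+1 by rewrite mulr_ge0 ?exprn_ge0 //; lra.
nra.
Qed.

Lemma power_series_increment_le (c : nat -> R) (K h s : R) (N : nat) :
  0 < h -> `|s| <= h / 2 -> (forall k, `|c k| * h ^+ k <= K) ->
  `|\sum_(0 <= k < N) c k * s ^+ k - \sum_(0 <= k < N) c k * 0 ^+ k|
    <= 2 * K * (`|s| / h).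
Proof.
move=> h0 sh cK; set q := `|s| / h.
have q0 : 0 <= q by rewrite divr_ge0 // ltW.
have q01 : 0 <= q <= 1 / 2 by rewrite q0 /= ler_pdivrMr //; lra.
have K0 : 0 <= K := le_trans (mulr_ge0 (normr_ge0 _) (exprn_ge0 _ (ltW h0))) (cK 0%N).
rewrite -sumrB; case: N => [|N].
  by rewrite big_geq // normr0 (mulr_ge0 (mulr_ge0 _ K0)).
rewrite big_ltn // expr0 subrr add0r.
apply: le_trans (ler_norm_sum _ _ _) _.
apply: le_trans (_ : \sum_(1 <= k < N.+1) K * q ^+ k <= _).
  apply: ler_sum_nat => k /andP[k1 _]; rewrite expr0n gtn_eqF // mulr0 subr0.
  rewrite normrM normrX.
  have -> : `|s| = q * h by rewrite /q divfK // gt_eqF.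
  by rewrite exprMn mulrCA [K * _]mulrC ler_wpM2l ?exprn_ge0.
by rewrite -mulr_sumr -mulrA mulrCA ler_wpM2l // geometric_partial_sum_le.
Qed.

Lemma real_analytic01_lipschitz_at (f : R -> R) (t0 : R) :
  real_analytic01 f -> 0 <= t0 <= 1 ->
  exists2 h : R, 0 < h & exists2 K : R, 0 <= K &
    forall t, 0 <= t <= 1 -> `|t - t0| <= h -> `|f t - f t0| <= K * `|t - t0|.
Proof.
move=> fa t0_01; have [r r0 [c fc]] := fa t0 t0_01.
pose h := Num.min (r / 2) (1 / 2).
have h0 : 0 < h by rewrite lt_min; apply/andP; split; lra.
have hr : h <= r / 2 by rewrite ge_min lexx.
have h1 : h <= 1 / 2 by rewrite ge_min lexx orbT.
(* the series converges at t1, at distance h from t0, so c_k h^k is bounded *)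
pose t1 := if t0 <= 1 / 2 then t0 + h else t0 - h.
have t1_01 : 0 <= t1 <= 1.
  by move: t0_01; rewrite /t1; case: ifPn; rewrite ?ltNge => ? /andP[? ?]; lra.
have t1h : `|t1 - t0| = h.
  by rewrite /t1; case: ifP => _; rewrite addrAC subrr add0r ?normrN gtr0_norm.
have [K cK] : exists K, forall k, `|c k| * h ^+ k <= K.
  have /cvg_series_bounded [M [_ cM]] : cvgn (series (fun k => c k * (t1 - t0) ^+ k)).
    by apply/cvg_ex; exists (f t1); apply: fc; rewrite // t1h; lra.
  exists (M + 1) => k; rewrite -t1h -normrX -normrM.
  by apply: (cM (M + 1)) => //; rewrite ltrDl.
have K0 : 0 <= K := le_trans (mulr_ge0 (normr_ge0 _) (exprn_ge0 _ (ltW h0))) (cK 0%N).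
exists (h / 2); first by rewrite divr_gt0.
exists (2 * K / h); first by apply: divr_ge0 (ltW h0); lra.
move=> t t01 th.
have ft : series (fun k => c k * (t - t0) ^+ k) @ \oo --> f t by apply: fc => //; lra.
have ft0 : series (fun k => c k * (t0 - t0) ^+ k) @ \oo --> f t0.
  by apply: fc; rewrite // subrr normr0.
rewrite mulrAC -mulrA.
apply: (closed_cvg _ (@closed_le _ _) _ _ (cvg_norm (cvgB ft ft0))).
apply: nearW => N; rewrite /series /= subrr; exact: power_series_increment_le.
Qed.

Lemma real_analytic01_cvg_comp {T : Type} {F : set_system T} {FF : Filter F}
    (f : R -> R) (g : T -> R) (t0 : R) :
  real_analytic01 f -> 0 <= t0 <= 1 -> g @ F --> t0 ->
  (\forall y \near F, 0 <= g y <= 1) -> (fun y => f (g y)) @ F --> f t0.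
Proof.
move=> fa t01 gt g01; have [h h0 [K K0 fK]] := real_analytic01_lipschitz_at fa t01.
apply/cvgrPdist_lt => e e0.
have d0 : 0 < Num.min h (e / (K + 1)) by rewrite lt_min h0 divr_gt0 //; lra.
apply: filterS2 g01 ((cvgrPdist_lt _ _).1 gt _ d0) => y y01.
rewrite lt_min distrC => /andP[yh ye]; rewrite distrC.
apply: le_lt_trans (fK _ y01 (ltW yh)) _.
move: ye; rewrite ltr_pdivlMr; last lra.
by have := normr_ge0 (g y - t0); nra.
Qed.

End RealAnalytic.

Section MatrixLimits.
Context {R : realFieldType} {T : Type} {F : set_system T} {FF : Filter F}.

Lemma cvg_mxP m n (A : T -> 'M[R]_(m, n)) (L : 'M[R]_(m, n)) :
  A @ F --> L <-> forall i j, (fun y => A y i j) @ F --> L i j.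
Proof.
split=> [AL i j | AL].
  exact: cvg_comp AL (@coord_continuous R m n i j L).
apply/cvgrPdist_lt => e e0.
have near_ij : forall ij : 'I_m * 'I_n, \forall y \near F, `|L ij.1 ij.2 - A y ij.1 ij.2| < e.
  by move=> [i j]; apply: (cvgrPdist_lt _ _).1 (AL i j) e e0.
apply: filterS (filter_forall FF near_ij) => y Ly.
rewrite [`|L - A y|]mx_normrE; apply: bigmax_lt => // ij _.
by rewrite !mxE; apply: Ly.
Qed.

Lemma cvg_sum_fun (I : Type) (r : seq I) (Q : pred I) (f : I -> T -> R) (l : I -> R) :
  (forall i, Q i -> f i @ F --> l i) ->
  (fun y => \sum_(i <- r | Q i) f i y) @ F --> \sum_(i <- r | Q i) l i.
Proof. by apply: cvg_big => //; exact: add_continuous. Qed.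

Lemma cvg_prod_fun (I : Type) (r : seq I) (Q : pred I) (f : I -> T -> R) (l : I -> R) :
  (forall i, Q i -> f i @ F --> l i) ->
  (fun y => \prod_(i <- r | Q i) f i y) @ F --> \prod_(i <- r | Q i) l i.
Proof. by apply: cvg_big => //; exact: mul_continuous. Qed.

Lemma cvg_mulmx m n p (A : T -> 'M[R]_(m, n)) (B : T -> 'M[R]_(n, p))
    (LA : 'M[R]_(m, n)) (LB : 'M[R]_(n, p)) :
  A @ F --> LA -> B @ F --> LB -> (fun y => A y *m B y) @ F --> LA *m LB.
Proof.
move=> /cvg_mxP AL /cvg_mxP BL; apply/cvg_mxP => i j; rewrite mxE.
under eq_cvg do rewrite mxE.
by apply: cvg_sum_fun => k _; apply: cvgM.
Qed.

Lemma cvg_trmx m n (A : T -> 'M[R]_(m, n)) (L : 'M[R]_(m, n)) :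
  A @ F --> L -> (fun y => (A y)^T) @ F --> L^T.
Proof.
move=> /cvg_mxP AL; apply/cvg_mxP => i j; rewrite mxE.
by under eq_cvg do rewrite mxE; apply: AL.
Qed.

Lemma cvg_det n (A : T -> 'M[R]_n) (L : 'M[R]_n) :
  A @ F --> L -> (fun y => \det (A y)) @ F --> \det L.
Proof.
move=> /cvg_mxP AL; apply: cvg_sum_fun => s _.
by apply: cvgM; [exact: cvg_cst | apply: cvg_prod_fun => i _].
Qed.

Lemma cvg_adj n (A : T -> 'M[R]_n) (L : 'M[R]_n) :
  A @ F --> L -> (fun y => \adj (A y)) @ F --> \adj L.
Proof.
move=> /cvg_mxP AL; apply/cvg_mxP => i j; rewrite mxE; under eq_cvg do rewrite mxE.
apply: cvgM; first exact: cvg_cst.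
apply: cvg_det; apply/cvg_mxP => k l; rewrite !mxE; under eq_cvg do rewrite !mxE.
exact: AL.
Qed.

Lemma cvg_invmx n (A : T -> 'M[R]_n) (L : 'M[R]_n) : L \in unitmx ->
  (\forall y \near F, A y \in unitmx) ->
  A @ F --> L -> (fun y => invmx (A y)) @ F --> invmx L.
Proof.
move=> LU AU AL.
have invE : {near F, (fun y => (\det (A y))^-1 *: \adj (A y)) =1 (fun y => invmx (A y))}.
  by apply: filterS AU => y yU; rewrite /invmx yU.
apply: cvg_trans (near_eq_cvg invE) _; rewrite /invmx LU.
apply: cvgZ (cvg_adj AL); apply: cvgV (cvg_det AL).
by rewrite -unitfE -unitmxE.
Qed.

End MatrixLimits.

Arguments simplex {R n}.
Arguments ones {R n}.

Section Simplex.
Variables (R : realType) (n : nat).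
Implicit Types (x w : 'cV[R]_n).

Lemma in_simplexP x : x \in simplex <-> (forall i, 0 <= x i 0) /\ \sum_i x i 0 = 1.
Proof. by rewrite in_setE. Qed.

Lemma simplex_entry01 x i : x \in simplex -> 0 <= x i 0 <= 1.
Proof.
move=> /in_simplexP[x0 x1]; rewrite x0 -x1 (bigD1 i) //= lerDl.
by apply: sumr_ge0 => k _.
Qed.

Lemma simplex_neq0 x : x \in simplex -> x != 0.
Proof.
move=> /in_simplexP[_ x1]; apply/eqP => x0; move: x1.
rewrite x0 big1 => [/eqP|i _]; last by rewrite mxE.
by rewrite eq_sym oner_eq0.
Qed.

Lemma simplex_has_gt0 x : x \in simplex -> exists i, 0 < x i 0.
Proof.
move=> /in_simplexP[x0 x1].
have [|i /andP[_ xi]] := @psumr_neq0P _ _ xpredT (fun i => x i 0) (fun i _ => x0 i).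
  by rewrite x1; exact/eqP/oner_neq0.
by exists i.
Qed.

Lemma delta_simplex i : delta_mx i 0 \in @simplex R n.
Proof.
apply/in_simplexP; split=> [k|]; first by rewrite mxE ler0n.
rewrite (bigD1 i) //= big1 => [|k ki]; first by rewrite mxE !eqxx addr0.
by rewrite mxE (negbTE ki).
Qed.

Lemma col_supported1 w (i : 'I_n) :
  (forall j, j != i -> w j 0 = 0) -> w = w i 0 *: delta_mx i 0.
Proof.
move=> w0; apply/matrixP => j k; rewrite ord1 !mxE eqxx andbT.
by have [->|ji] := eqVneq j i; rewrite ?mulr1n ?mulr0n ?mulr1 // mulr0 w0.
Qed.

Definition normalize w : 'cV[R]_n := (\sum_i w i 0)^-1 *: w.

Lemma normalize_simplex w :
  (forall i, 0 <= w i 0) -> 0 < \sum_i w i 0 -> normalize w \in simplex.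
Proof.
move=> w0 s0; apply/in_simplexP; rewrite /normalize; split=> [i|].
  by rewrite mxE mulr_ge0 ?invr_ge0 ?w0 ?ltW.
rewrite -(mulVf (lt0r_neq0 s0)) mulr_sumr.
by apply: eq_bigr => i _; rewrite mxE.
Qed.

Lemma normalize_id x : x \in simplex -> normalize x = x.
Proof. by move=> /in_simplexP[_ x1]; rewrite /normalize x1 invr1 scale1r. Qed.

Lemma normalizeZ c w : c != 0 -> normalize (c *: w) = normalize w.
Proof.
move=> c0; rewrite /normalize.
have -> : \sum_i (c *: w) i 0 = c * \sum_i w i 0.
  by rewrite mulr_sumr; apply: eq_bigr => i _; rewrite mxE.
by rewrite scalerA invfM mulrAC mulVf ?mul1r.
Qed.

Lemma cvg_normalize {T : Type} {F : set_system T} {FF : Filter F}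
    (w : T -> 'cV[R]_n) w0 :
  \sum_i w0 i 0 != 0 -> w @ F --> w0 -> (fun y => normalize (w y)) @ F --> normalize w0.
Proof.
move=> s0 ww0; rewrite /normalize; apply: cvgZ (ww0); apply: cvgV => //.
by apply: cvg_sum_fun => i _; move/cvg_mxP: ww0.
Qed.

Lemma cvg_within_simplex_comp (f : R -> R) x0 i :
  real_analytic01 f -> x0 \in simplex ->
  (fun y => f (y i 0)) @ within simplex (nbhs x0) --> f (x0 i 0).
Proof.
move=> fa x0S.
apply: (real_analytic01_cvg_comp (F := within simplex (nbhs x0)) fa).
- exact: simplex_entry01.
- apply: cvg_trans; last exact: (@coord_continuous R n 1 i 0 x0).
  by apply: cvg_app; exact: cvg_within.
- by apply: filterS (withinT _ _) => y yS; apply: simplex_entry01; rewrite inE.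
Qed.

Lemma cvg_within_simplex_diagf (f : 'I_n -> R -> R) x0 :
  (forall i, real_analytic01 (f i)) -> x0 \in simplex ->
  diagf f @ within simplex (nbhs x0) --> diagf f x0.
Proof.
move=> fa x0S; apply/cvg_mxP => i j.
have diagfE y : diagf f y i j = f i (y i 0) *+ (i == j) by rewrite !mxE.
rewrite diagfE (funext diagfE).
case: eqP => _; last exact: cvg_cst.
exact: cvg_within_simplex_comp.
Qed.

End Simplex.

Section LeftFixed.
Variables (R : pzSemiRingType) (n : nat).

Lemma left_fixedP (M : 'M[R]_n) (y : 'cV[R]_n) :
  y^T *m M = y^T <-> forall j, \sum_k y k 0 * M k j = y j 0.
Proof.
split=> [/matrixP yM j | yM].
  by have := yM 0 j; rewrite !mxE => <-; apply: eq_bigr => k _; rewrite mxE.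
by apply/matrixP => i j; rewrite ord1 !mxE -yM; apply: eq_bigr => k _; rewrite mxE.
Qed.

End LeftFixed.

Lemma subr_diagf (R : realType) n (f : 'I_n -> R -> R) (x : 'cV[R]_n) :
  1%:M - diagf f x = diagf (fun i t => 1 - f i t) x.
Proof. by apply/matrixP => i j; rewrite !mxE; case: eqP; rewrite ?mulr1n ?mulr0n ?subr0. Qed.

Lemma connect_pred_backward (T : finType) (e : rel T) (Q : pred T) x y :
  (forall u v, e u v -> Q v -> Q u) -> connect e x y -> Q y -> Q x.
Proof.
move=> eQ /connectP[s xs ->] {y}.
by elim: s x xs => [|z s IH] x //= /andP[xz zs] Qs; apply: eQ xz (IH z zs Qs).
Qed.

Section StationaryVectors.
Variables (R : realType) (n : nat) (P : 'M[R]_n).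
Hypothesis P_ge0 : forall i j, 0 <= P i j.
Hypothesis P_connected : strongly_connected P.

Lemma left_fixed_ge0_eq0 (y : 'cV[R]_n) j :
  (forall i, 0 <= y i 0) -> y^T *m P = y^T -> y j 0 = 0 -> y = 0.
Proof.
move=> y0 /left_fixedP yP yj; apply/matrixP => i k; rewrite ord1 mxE.
apply/eqP; apply: (connect_pred_backward (Q := fun i => y i 0 == 0)) (P_connected i j) _.
  move=> u v Puv /eqP yv; move: (yP v); rewrite yv => /eqP.
  rewrite psumr_eq0 => [/allP/(_ u (mem_index_enum _))|l _]; last exact: mulr_ge0.
  by rewrite /= mulf_eq0 (gt_eqF Puv) orbF.
by rewrite yj.
Qed.

Lemma left_fixed_simplex_gt0 (p : 'cV[R]_n) :
  p \in simplex -> p^T *m P = p^T -> forall j, 0 < p j 0.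
Proof.
move=> pS pP j; have [p0 _] := (in_simplexP _).1 pS.
rewrite lt_def p0 andbT; apply: contraNneq (simplex_neq0 pS).
by move=> pj; apply/eqP; apply: left_fixed_ge0_eq0 p0 pP pj.
Qed.

Lemma left_fixed_proportional (p z : 'cV[R]_n) :
  p \in simplex -> p^T *m P = p^T -> z^T *m P = z^T -> exists c, z = c *: p.
Proof.
move=> pS pP zP; have p_gt0 := left_fixed_simplex_gt0 pS pP.
have [j1 _] := simplex_has_gt0 pS.
have [j0 _ j0_min] := @arg_minP _ _ 'I_n j1 xpredT (fun j => z j 0 / p j 0) isT.
pose c := z j0 0 / p j0 0; exists c.
(* c is the least ratio z_j / p_j, so z - c p is nonnegative and vanishes at j0 *)
have y0 i : 0 <= (z - c *: p) i 0.
  by rewrite !mxE subr_ge0 -ler_pdivlMr ?p_gt0 ?j0_min.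
have yP : (z - c *: p)^T *m P = (z - c *: p)^T.
  by rewrite linearB linearZ /= mulmxBl -scalemxAl zP pP.
have yj0 : (z - c *: p) j0 0 = 0 by rewrite !mxE /c divfK ?subrr ?gt_eqF ?p_gt0.
by apply/eqP; rewrite -subr_eq0 (left_fixed_ge0_eq0 y0 yP yj0).
Qed.

End StationaryVectors.

Section DeGrootAppraisal.
Variables (R : realType) (n : nat) (P : 'M[R]_n) (a : 'I_n -> R -> R) (p : 'cV[R]_n).
Hypothesis P_ge0 : forall i j, 0 <= P i j.
Hypothesis P_connected : strongly_connected P.
Hypothesis a_maps01 : forall i, maps01 (a i).
Hypothesis a_eq1_uniq : forall x, x \in simplex -> forall i j,
  a i (x i 0) = 1 -> a j (x j 0) = 1 -> i = j.
Hypothesis p_simplex : p \in simplex.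
Hypothesis p_fixed : p^T *m P = p^T.

Implicit Types x v : 'cV[R]_n.

Local Notation a_compl := (fun i t => 1 - a i t).

Let p_gt0 := left_fixed_simplex_gt0 P_ge0 P_connected p_simplex p_fixed.

Let compl_gt0 x i : x \in simplex -> a i (x i 0) != 1 -> 0 < 1 - a i (x i 0).
Proof.
move=> xS ai1; have /andP[_ ai_le1] := a_maps01 i (simplex_entry01 i xS).
by rewrite subr_gt0 lt_neqAle ai1 ai_le1.
Qed.

Lemma M2_left_fixedP x v :
  v^T *m M2 P a x = v^T <-> (diagf a_compl x *m v)^T *m P = (diagf a_compl x *m v)^T.
Proof.
have -> : (diagf a_compl x *m v)^T = v^T *m diagf a_compl x by rewrite trmx_mul tr_diag_mx.
have -> : M2 P a x = 1%:M - diagf a_compl x + diagf a_compl x *m P.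
  by rewrite /M2 -subr_diagf opprB subrKC.
rewrite mulmxDr mulmxBr mulmx1 mulmxA -addrA.
split=> [/(canRL (addKr _))|->]; last by rewrite addNr addr0.
by rewrite addNr addrC => /eqP; rewrite subr_eq0 => /eqP.
Qed.

(* proportional to p_j / (1 - a_j(x_j)) when no a_j(x_j) is 1, but unlike the
   case split in F2 it depends continuously on x *)
Definition weights x : 'cV[R]_n :=
  \col_j (p j 0 * \prod_(k | k != j) (1 - a k (x k 0))).

Lemma weights_ge0 x j : x \in simplex -> 0 <= weights x j 0.
Proof.
move=> xS; have [p_ge0 _] := (in_simplexP _).1 p_simplex.
rewrite mxE mulr_ge0 // prodr_ge0 // => k _.
by have /andP[_] := a_maps01 k (simplex_entry01 k xS); rewrite subr_ge0.
Qed.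

Lemma weights_gt0 x i : x \in simplex ->
  (forall k, k != i -> a k (x k 0) != 1) -> 0 < weights x i 0.
Proof. by move=> xS ak; rewrite mxE mulr_gt0 ?p_gt0 // prodr_gt0 // => k /ak/compl_gt0->. Qed.

Lemma sum_weights_gt0 x : x \in simplex -> 0 < \sum_j weights x j 0.
Proof.
move=> xS; have [i ai] : exists i, forall k, k != i -> a k (x k 0) != 1.
  case: (pickP (fun i => a i (x i 0) == 1)) => [i /eqP ai | none].
    by exists i => k; apply: contra_neq => ak; apply: a_eq1_uniq ak ai.
  by have [i _] := simplex_has_gt0 xS; exists i => k _; rewrite none.
rewrite (bigD1 i) //= ltr_pwDl ?weights_gt0 //.
by apply: sumr_ge0 => k _; apply: weights_ge0.
Qed.

Lemma weights_compl x : diagf a_compl x *m weights x = (\prod_k (1 - a k (x k 0))) *: p.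
Proof.
apply/matrixP => j o; rewrite ord1 mul_diag_mx !mxE [in RHS](bigD1 j) //=.
by rewrite mulrCA mulrC.
Qed.

Lemma F2E x : F2 a p x =
  if [pick i | a i (x i 0) == 1] is Some i then delta_mx i 0
  else normalize (\col_j (p j 0 / (1 - a j (x j 0)))).
Proof.
rewrite /F2 /normalize; case: pickP => // _.
by congr (_^-1 *: _); apply: eq_bigr => j _; rewrite mxE.
Qed.

Lemma F2_normalize_weights x : x \in simplex -> F2 a p x = normalize (weights x).
Proof.
move=> xS; rewrite F2E; case: pickP => [i /eqP ai | none].
  have wi : weights x = weights x i 0 *: delta_mx i 0.
    apply: col_supported1 => j ji; rewrite mxE (bigD1 i) 1?eq_sym //= ai.
    by rewrite subrr mul0r mulr0.
  rewrite wi normalizeZ ?normalize_id ?delta_simplex // gt_eqF // weights_gt0 // => k.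
  by apply: contra_neq => ak; apply: a_eq1_uniq ak ai.
have a_neq1 j : a j (x j 0) != 1 by rewrite none.
have prod_gt0 : 0 < \prod_k (1 - a k (x k 0)) by apply: prodr_gt0 => k _; exact: compl_gt0.
suff -> : weights x = \prod_k (1 - a k (x k 0)) *: \col_j (p j 0 / (1 - a j (x j 0))).
  by rewrite normalizeZ ?gt_eqF.
apply/matrixP => j o; rewrite ord1 !mxE [in RHS](bigD1 j) //=.
by field; rewrite gt_eqF ?compl_gt0.
Qed.

Lemma F2_simplex x : x \in simplex -> F2 a p x \in simplex.
Proof.
move=> xS; rewrite F2_normalize_weights //.
by apply: normalize_simplex (sum_weights_gt0 xS) => j; apply: weights_ge0.
Qed.

Lemma F2_left_fixed x : x \in simplex -> (F2 a p x)^T *m M2 P a x = (F2 a p x)^T.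
Proof.
move=> xS; apply/M2_left_fixedP; rewrite F2_normalize_weights // /normalize.
by rewrite -scalemxAr weights_compl scalerA !linearZ /= -scalemxAl p_fixed.
Qed.

Lemma F2_unique x v : x \in simplex -> v \in simplex ->
  v^T *m M2 P a x = v^T -> v = F2 a p x.
Proof.
move=> xS vS /M2_left_fixedP.
move=> /(left_fixed_proportional P_ge0 P_connected p_simplex p_fixed)[c vc].
have vcE j : (1 - a j (x j 0)) * v j 0 = c * p j 0.
  by have := congr1 (fun M : 'cV[R]_n => M j 0) vc; rewrite mul_diag_mx !mxE.
rewrite F2E; case: pickP => [i /eqP ai | none].
  have c0 : c = 0.
    apply/eqP; have := vcE i; rewrite ai subrr mul0r => /esym/eqP.
    by rewrite mulf_eq0 (gt_eqF (p_gt0 i)) orbF.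
  have v_eq0 j : j != i -> v j 0 = 0.
    move=> ji; apply/eqP; have := vcE j.
    rewrite c0 mul0r => /eqP; rewrite mulf_eq0 subr_eq0 => /orP[/eqP aj|//].
    by rewrite (a_eq1_uniq xS (esym aj) ai) eqxx in ji.
  have [_ v1] := (in_simplexP _).1 vS.
  have vi1 : v i 0 = 1 by rewrite -v1 (bigD1 i) //= big1 ?addr0 // => j; exact: v_eq0.
  by rewrite (col_supported1 v_eq0) vi1 scale1r.
have a_neq1 j : a j (x j 0) != 1 by rewrite none.
have vE : v = c *: \col_j (p j 0 / (1 - a j (x j 0))).
  apply/matrixP => j o; rewrite ord1 !mxE mulrA -vcE mulrAC mulfV ?mul1r //.
  by rewrite gt_eqF ?compl_gt0.
have c0 : c != 0 by apply: contra_neq (simplex_neq0 vS) => c0; rewrite vE c0 scale0r.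
by rewrite -(normalize_id vS) vE normalizeZ.
Qed.

Lemma weights_cvg x0 : (forall i, real_analytic01 (a i)) -> x0 \in simplex ->
  weights @ within simplex (nbhs x0) --> weights x0.
Proof.
move=> a_an x0S; apply/cvg_mxP => j o.
have weightsE y : weights y j o = p j 0 * \prod_(k | k != j) (1 - a k (y k 0)).
  by rewrite mxE.
rewrite weightsE (funext weightsE); apply: cvgM; first exact: cvg_cst.
apply: cvg_prod_fun => k _; apply: cvgB; first exact: cvg_cst.
exact: cvg_within_simplex_comp.
Qed.

Lemma F2_continuous : (forall i, real_analytic01 (a i)) ->
  {within simplex, continuous (F2 a p)}.
Proof.
move=> a_an; apply/subspace_continuousP => x0 x0S; rewrite -inE in x0S.
have F2_near : {near within simplex (nbhs x0), (fun y => normalize (weights y)) =1 F2 a p}.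
  by apply: filterS (withinT _ _) => y yS; rewrite F2_normalize_weights // inE.
apply: cvg_trans (near_eq_cvg F2_near) _; rewrite /from_subspace /= F2_normalize_weights //.
by apply: cvg_normalize; [rewrite gt_eqF ?sum_weights_gt0 | exact: weights_cvg].
Qed.

End DeGrootAppraisal.

Lemma unitmx_of_ker0 (F : fieldType) n (M : 'M[F]_n) :
  (forall y : 'cV[F]_n, M *m y = 0 -> y = 0) -> M \in unitmx.
Proof.
move=> ker0; rewrite -unitmx_tr -row_free_unit -kermx_eq0.
apply/eqP/row_matrixP => i; rewrite row0.
have rowK : row i (kermx M^T) *m M^T = 0 by rewrite -row_mul mulmx_ker row0.
apply: trmx_inj; rewrite trmx0; apply: ker0.
by rewrite -[M in M *m _]trmxK -trmx_mul rowK trmx0.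
Qed.

Section MMatrix.
Variables (R : realType) (n : nat) (P : 'M[R]_n) (al be : 'I_n -> R).
Hypothesis P_stoch : row_stochastic P.
Hypothesis be_ge0 : forall i, 0 <= be i.
Hypothesis be_lt_al : forall i, be i < al i.

Local Notation M := (diag_mx (\row_i al i) - diag_mx (\row_i be i) *m P).

(* minimum principle: where y is smallest, (M y)_i <= (al_i - be_i) y_i *)
Lemma mmatrix_monotone (y : 'cV[R]_n) :
  (forall i, 0 <= (M *m y) i 0) -> forall i, 0 <= y i 0.
Proof.
move=> My0 i; have [P0 P1] := P_stoch.
have [m _ m_min] := @arg_minP _ _ 'I_n i xpredT (fun k => y k 0) isT.
apply: le_trans (m_min i isT); rewrite leNgt; apply/negP => ym.
have avg : y m 0 <= \sum_j P m j * y j 0.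
  rewrite -[X in X <= _]mul1r -(P1 m) mulr_suml.
  by apply: ler_sum => j _; rewrite ler_wpM2l ?m_min.
move: (My0 m); rewrite mulmxBl -mulmxA !mul_diag_mx !mxE.
have := be_lt_al m; have := be_ge0 m; nra.
Qed.

Lemma mmatrix_unit : M \in unitmx.
Proof.
apply: unitmx_of_ker0 => y My0; apply/matrixP => i k; rewrite ord1 mxE.
have y_ge0 : forall j, 0 <= y j 0.
  by apply: mmatrix_monotone => j; rewrite My0 mxE.
have Ny_ge0 : forall j, 0 <= (- y) j 0.
  by apply: mmatrix_monotone => j; rewrite mulmxN My0 oppr0 mxE.
by apply/eqP; rewrite eq_le y_ge0 andbT -oppr_ge0; have := Ny_ge0 i; rewrite mxE.
Qed.

Lemma mmatrix_inv_ge0 i j : 0 <= invmx M i j.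
Proof.
have := @mmatrix_monotone (invmx M *m delta_mx j 0) _ i.
rewrite mulmxA mulmxV ?mmatrix_unit // mul1mx mxE (bigD1 j) //= big1 => [|k kj].
  by rewrite !mxE !eqxx mulr1 addr0; apply=> k; rewrite mxE ler0n.
by rewrite mxE (negbTE kj) mulr0.
Qed.

End MMatrix.

Lemma row_stochastic_mul_ones (R : realType) n (P : 'M[R]_n) :
  row_stochastic P -> P *m ones = ones.
Proof.
move=> [_ P1]; apply/matrixP => i o; rewrite !mxE -[RHS](P1 i).
by apply: eq_bigr => j _; rewrite mxE mulr1.
Qed.

Lemma trmx_mul_ones (R : realType) n (u : 'cV[R]_n) : u^T *m ones = (\sum_i u i 0)%:M.
Proof.
apply/matrixP => i j; rewrite !ord1 !mxE mulr1n.
by apply: eq_bigr => k _; rewrite !mxE mulr1.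
Qed.

Section FriedkinJohnsenAppraisal.
Variables (R : realType) (n : nat) (P : 'M[R]_n).
Variables (a b : 'I_n -> R -> R) (Z : 'cV[R]_n -> 'M[R]_n).
Hypothesis P_stoch : row_stochastic P.
Hypothesis n_gt0 : (0 < n)%N.
Hypothesis b_maps01 : forall i, maps01 (b i).
Hypothesis d_pos : forall i t, 0 <= t <= 1 ->
  1 - a i t - b i t != 0 /\ 0 <= 1 - a i t - b i t.
Hypothesis Z_stoch : forall x, x \in simplex -> row_stochastic (Z x).

Implicit Types x u : 'cV[R]_n.

Definition M1 x := 1%:M - diagf a x - diagf b x *m P.
Definition D1 x := 1%:M - diagf a x - diagf b x.

Let d_gt0 x i : x \in simplex -> 0 < 1 - a i (x i 0) - b i (x i 0).
Proof. by move=> /(simplex_entry01 i)/(d_pos i)[d0 d_ge0]; rewrite lt_neqAle eq_sym d0. Qed.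

Let b_ge0 x i : x \in simplex -> 0 <= b i (x i 0).
Proof. by move=> /(simplex_entry01 i)/(b_maps01 i)/andP[]. Qed.

Lemma M1_unit x : x \in simplex -> M1 x \in unitmx.
Proof.
move=> xS; rewrite /M1 subr_diagf.
apply: (@mmatrix_unit _ _ P (fun i => 1 - a i (x i 0)) (fun i => b i (x i 0))) => // i.
  exact: b_ge0.
by have := d_gt0 i xS; lra.
Qed.

Lemma invmx_M1_ge0 x i j : x \in simplex -> 0 <= invmx (M1 x) i j.
Proof.
move=> xS; rewrite /M1 subr_diagf.
apply: (@mmatrix_inv_ge0 _ _ P (fun i => 1 - a i (x i 0)) (fun i => b i (x i 0))) => // k.
  exact: b_ge0.
by have := d_gt0 k xS; lra.
Qed.

Lemma D1_diagf x : D1 x = diagf (fun i t => 1 - a i t - b i t) x.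
Proof. by apply/matrixP => i j; rewrite !mxE; case: eqP; rewrite ?mulr1n ?mulr0n ?subr0. Qed.

Lemma D1_unit x : x \in simplex -> D1 x \in unitmx.
Proof.
move=> xS; rewrite D1_diagf unitmxE det_diag unitfE prodf_seq_neq0.
by apply/allP => i _; rewrite mxE gt_eqF ?d_gt0.
Qed.

Lemma D1_add x : D1 x + diagf b x *m (1%:M - P) = M1 x.
Proof. by rewrite /D1 /M1 mulmxBr mulmx1 addrA subrK. Qed.

Lemma M1_ones x : M1 x *m ones = D1 x *m ones.
Proof.
rewrite -D1_add mulmxDl -mulmxA [(1%:M - P) *m _]mulmxBl mul1mx.
by rewrite (row_stochastic_mul_ones P_stoch) subrr mulmx0 addr0.
Qed.

Definition u1 x : 'cV[R]_n := (n%:R^-1 *: (ones^T *m invmx (M1 x) *m D1 x))^T.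

Lemma u1_sum x : x \in simplex -> \sum_i u1 x i 0 = 1.
Proof.
move=> xS; suff /matrixP/(_ 0 0) : (u1 x)^T *m ones = 1%:M.
  by rewrite trmx_mul_ones !mxE !mulr1n.
rewrite trmxK -scalemxAl -mulmxA -M1_ones mulmxA mulmxKV ?M1_unit //.
rewrite trmx_mul_ones (eq_bigr (fun=> 1)) => [|i _]; last by rewrite mxE.
by rewrite sumr_const card_ord scale_scalar_mx mulVf ?pnatr_eq0 -?lt0n.
Qed.

Lemma Umat_left_fixedP x u : x \in simplex -> \sum_i u i 0 = 1 ->
  (u^T *m Umat P a b x = u^T <->
   u^T *m invmx (D1 x) *m M1 x = n%:R^-1 *: ones^T).
Proof.
move=> xS u_sum; set K := invmx (D1 x) *m diagf b x *m (1%:M - P).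
have UE : u^T *m Umat P a b x = n%:R^-1 *: ones^T - u^T *m K.
  by rewrite /Umat mulmxBr -/(D1 x) -/K -scalemxAr mulmxA trmx_mul_ones u_sum mul1mx.
have ME : u^T *m invmx (D1 x) *m M1 x = u^T + u^T *m K.
  by rewrite -D1_add mulmxDr -mulmxA mulVmx ?D1_unit // mulmx1 /K !mulmxA.
rewrite UE ME; split=> [/eqP|<-]; last by rewrite addrK.
by rewrite subr_eq eq_sym => /eqP.
Qed.

Lemma u1_uniqueP x u : x \in simplex ->
  u^T *m invmx (D1 x) *m M1 x = n%:R^-1 *: ones^T <-> u = u1 x.
Proof.
move=> xS; split=> [uDM|->].
  apply: trmx_inj; rewrite trmxK !scalemxAl -uDM.
  by rewrite mulmxK ?M1_unit // mulmxKV ?D1_unit.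
by rewrite trmxK -!scalemxAl -!mulmxA mulKVmx ?D1_unit // mulVmx ?M1_unit // mulmx1.
Qed.

Lemma Umat_left_eig1P x u : x \in simplex ->
  left_eig1_normalized (Umat P a b x) u <-> u = u1 x.
Proof.
move=> xS; split=> [[uU u_sum] | ->].
  by apply/u1_uniqueP => //; apply/Umat_left_fixedP.
by split; [apply/Umat_left_fixedP/u1_uniqueP; rewrite ?u1_sum | exact: u1_sum].
Qed.

Lemma dyn1E x : dyn1 P a b Z x = ((u1 x)^T *m Z x)^T.
Proof.
rewrite /dyn1 /Cmat -/(M1 x) -/(D1 x) trmxK -scalemxAl linearZ /=; congr (_ *: _).
by rewrite !trmx_mul trmxK !mulmxA.
Qed.

Lemma u1_ge0 x i : x \in simplex -> 0 <= u1 x i 0.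
Proof.
move=> xS; rewrite !mxE mulr_ge0 ?invr_ge0 ?ler0n // sumr_ge0 // => j _.
rewrite D1_diagf !mxE; apply: mulr_ge0; last by rewrite mulrn_wge0 ?ltW ?d_gt0.
by apply: sumr_ge0 => k _; rewrite !mxE mul1r invmx_M1_ge0.
Qed.

Lemma dyn1_simplex x : x \in simplex -> dyn1 P a b Z x \in simplex.
Proof.
move=> xS; have [Z_ge0 Z_row1] := Z_stoch xS.
rewrite dyn1E; apply/in_simplexP; split=> [j|].
  by rewrite !mxE sumr_ge0 // => k _; rewrite mxE mulr_ge0 ?u1_ge0.
under eq_bigr do rewrite !mxE.
rewrite exchange_big /= -[RHS](u1_sum xS); apply: eq_bigr => k _.
by rewrite -mulr_sumr Z_row1 mulr1 mxE.
Qed.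

Lemma dyn1_continuous :
  (forall i, real_analytic01 (a i) /\ real_analytic01 (b i)) ->
  {within simplex, continuous Z} -> {within simplex, continuous (dyn1 P a b Z)}.
Proof.
move=> ab_an Z_cont; apply/subspace_continuousP => x0 x0S; rewrite -inE in x0S.
have a_cvg := cvg_within_simplex_diagf (fun i => (ab_an i).1) x0S.
have b_cvg := cvg_within_simplex_diagf (fun i => (ab_an i).2) x0S.
have M1_cvg : M1 @ within simplex (nbhs x0) --> M1 x0.
  by apply: cvgB; [apply: cvgB a_cvg; exact: cvg_cst | apply: cvg_mulmx b_cvg (cvg_cst _)].
have D1_cvg : D1 @ within simplex (nbhs x0) --> D1 x0.
  by apply: cvgB b_cvg; apply: cvgB a_cvg; exact: cvg_cst.
have M1_near_unit : \forall y \near within simplex (nbhs x0), M1 y \in unitmx.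
  by apply: filterS (withinT _ _) => y yS; rewrite M1_unit // inE.
rewrite /from_subspace /=; apply: cvgZ (cvg_cst _) _.
apply: cvg_mulmx (cvg_cst _); apply: cvg_trmx.
apply: cvg_mulmx (cvg_invmx (M1_unit x0S) M1_near_unit M1_cvg) _.
rewrite (_ : Cmat a b Z = fun y => D1 y *m Z y) //; apply: cvg_mulmx D1_cvg _.
by move/subspace_continuousP: Z_cont; apply; exact: set_mem.
Qed.

End FriedkinJohnsenAppraisal.

Theorem theorem1 (R : realType) (n : nat) (P : 'M[R]_n) :
  (2 <= n)%N ->
  row_stochastic P ->
  (forall i, P i i = 0) ->
  (forall i j, 0 <= P i j <= 1) ->
  strongly_connected P ->
  (* part (1) *)
  (forall (a b : 'I_n -> R -> R) (Z : 'cV[R]_n -> 'M[R]_n),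
     (forall i, real_analytic01 (a i) /\ real_analytic01 (b i)) ->
     (forall i, maps01 (a i) /\ maps01 (b i)) ->
     (forall i t, 0 <= t <= 1 ->
        1 - a i t - b i t != 0 /\ 0 <= 1 - a i t - b i t) ->
     (forall x, x \in (@simplex R n) ->
        doubly_stochastic (Z x) /\ orthogonal_mx (Z x)) ->
     {within (@simplex R n), continuous Z} ->
     (forall x, x \in (@simplex R n) ->
        [/\ (1%:M - diagf a x - diagf b x *m P) \in unitmx,
            (exists! u, left_eig1_normalized (Umat P a b x) u),
            (forall u, left_eig1_normalized (Umat P a b x) u ->
               dyn1 P a b Z x = (u^T *m Z x)^T) &
            dyn1 P a b Z x \in (@simplex R n)]) /\
     {within (@simplex R n), continuous (dyn1 P a b Z)}) /\
  (* part (2) *)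
  (forall (a : 'I_n -> R -> R) (p : 'cV[R]_n),
     (forall i, real_analytic01 (a i)) ->
     (forall i, maps01 (a i)) ->
     (forall x, x \in (@simplex R n) -> forall i j,
        a i (x i 0) = 1 -> a j (x j 0) = 1 -> i = j) ->
     p \in (@simplex R n) ->
     p^T *m P = p^T ->
     (forall x, x \in (@simplex R n) ->
        [/\ F2 a p x \in (@simplex R n),
            (F2 a p x)^T *m M2 P a x = (F2 a p x)^T &
            (forall v, v \in (@simplex R n) -> v^T *m M2 P a x = v^T ->
               v = F2 a p x)]) /\
     {within (@simplex R n), continuous (F2 a p)}).
Proof.
move=> n_ge2 P_stoch _ _ P_connected.
have n_gt0 : (0 < n)%N by apply: leq_trans n_ge2.
have [P_ge0 _] := P_stoch.
split.
  move=> a b Z ab_an ab_maps d_pos Z_prop Z_cont.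
  have b_maps i : maps01 (b i) := (ab_maps i).2.
  have Z_stoch x : x \in simplex -> row_stochastic (Z x).
    by move=> /Z_prop[[Z0 [Z1 _]] _].
  split=> [x xS|]; last exact: dyn1_continuous.
  have eig1P u := Umat_left_eig1P P_stoch n_gt0 b_maps d_pos u xS.
  split.
  - exact: M1_unit.
  - by exists (u1 P a b x); split=> [|u /eig1P ->]; first exact/eig1P.
  - by move=> u /eig1P ->; rewrite dyn1E.
  - exact: dyn1_simplex.
move=> a p a_an a_maps a_uniq pS pP; split; last exact: F2_continuous.
move=> x xS; split; [exact: F2_simplex | exact: F2_left_fixed |].
by move=> v vS vM; apply: F2_unique.
Qed.
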